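(* Let $k\ge1$ be an integer, let $\mathbf G$ be an abelian group, let $A_1,\dots,A_k,B\subseteq\mathbf G$ be finite, let $W,Y\subseteq\mathbf G^k$ be finite and $X,Z\subseteq\mathbf G$ be finite. Then (i) $|W\times X|\cdot|Y-\Delta(Z)|\le|Y\times W\times Z-\Delta(X)|$ (here $Y\times W\times Z\subseteq\mathbf G^{2k+1}$); (ii) for every $m\in\{1,\dots,k-1\}$, $$|A_1\times\dots\times A_k-\Delta(B)|\le|A_1\times\dots\times A_m-\Delta(A_{m+1})|\cdot|A_{m+1}\times\dots\times A_k-\Delta(B)|;$$ (iii) $|Y\times Z-\Delta(X)|=|Y\times X-\Delta(Z)|$ (here $Y\times Z, Y\times X\subseteq\mathbf G^{k+1}$).
   Context: For $S\subseteq\mathbf G$ and an integer $d\ge1$, $\Delta(S)=\Delta_d(S)=\{(s,s,\dots,s)\in\mathbf G^d: s\in S\}$, the dimension $d$ being that of the set it is subtracted from. For $U,V\subseteq\mathbf G^d$, $U-V=\{u-v:u\in U,v\in V\}$ (coordinatewise). *)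

From HB Require Import structures.
From mathcomp Require Import all_boot all_order all_algebra.
From mathcomp Require Import finmap.
Set Implicit Arguments. Unset Strict Implicit. Unset Printing Implicit Defensive.
Import GRing.Theory.
Local Open Scope fset_scope.

(* Points of G^d are represented as sequences of length d over G. *)
Section Defs.
Variable G : zmodType.

(* U - Delta(S): coordinatewise u - (s,...,s), the dimension being that of u. *)
Definition dsub (U : {fset seq G}) (S : {fset G}) : {fset seq G} :=
  [fset [seq (x - s)%R | x <- u] | u in U, s in S].

Definition cartp (U V : {fset seq G}) : {fset seq G} :=
  [fset u ++ v | u in U, v in V].

Definition lift1 (X : {fset G}) : {fset seq G} := [fset [:: x] | x in X].

Definition prodL (s : seq {fset G}) : {fset seq G} :=
  foldr (fun A P => cartp (lift1 A) P) [fset [::]] s.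
End Defs.

(* (iii) The change of coordinates (y - x, z - x) |-> (y - z, x - z) is an
   involution carrying Y x Z - Delta(X) onto Y x X - Delta(Z).
   (ii) For a in A_1 x ... x A_m and (c, t) in A_(m+1) x ... x A_k,
   (a, c, t) - Delta(b) = ((a - Delta(c)) + Delta(c - b), (c, t) - Delta(b)), so the
   left-hand set is an image of the product of the two right-hand sets.
   (i) Fix for every d in Y - Delta(Z) a representation d = y - Delta(z).  Then
   ((w, x), d) |-> (y, w, z) - Delta(x) is injective: d is recovered as
   (y - Delta(x)) - Delta(z - x), and d determines z, hence x and w. *)

From HB Require Import structures.
From mathcomp Require Import all_boot all_order all_algebra.
From mathcomp Require Import finmap.
Set Implicit Arguments. Unset Strict Implicit. Unset Printing Implicit Defensive.
Import GRing.Theory.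
Local Open Scope fset_scope.

Lemma card_fsetM (K K' : choiceType) (A : {fset K}) (B : {fset K'}) :
  #|` A `*` B| = (#|` A| * #|` B|)%N.
Proof.
rewrite card_fset_sum1 big_imfset2 /=; last by move=> [? ?] [? ?] _ _ [-> ->].
by rewrite big_const_seq count_predT iter_addn_0 mulnC -card_fset_sum1.
Qed.

Lemma leq_card_fset_in (T T' : choiceType) (f : T -> T') (A : {fset T}) (B : {fset T'}) :
  {in A &, injective f} -> {in A, forall a, f a \in B} -> (#|` A| <= #|` B|)%N.
Proof.
move=> /card_in_imfsetP /eqP <- fAB; apply: fsubset_leq_card.
by apply/fsubsetP => _ /imfsetP [a /= Aa ->]; apply: fAB.
Qed.

Lemma leq_card_fsub_imfset (T T' : choiceType) (f : T -> T') (A : {fset T}) (B : {fset T'}) :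
  B `<=` f @` A -> (#|` B| <= #|` A|)%N.
Proof. by move=> /fsubset_leq_card /leq_trans; apply; apply: leq_imfset_card. Qed.

Section DifferenceSets.
Variable G : zmodType.
Local Open Scope ring_scope.
Implicit Types (U V Y W : {fset seq G}) (S X Z C B : {fset G}) (L : seq {fset G}).

Lemma dsubP U S s :
  reflect (exists2 u, u \in U & exists2 x, x \in S & s = [seq a - x | a <- u])
          (s \in dsub U S).
Proof. exact: imfset2P. Qed.

Lemma cartpP U V s :
  reflect (exists2 u, u \in U & exists2 v, v \in V & s = u ++ v) (s \in cartp U V).
Proof. exact: imfset2P. Qed.

Lemma lift1P S s : reflect (exists2 x, x \in S & s = [:: x]) (s \in lift1 S).
Proof. exact: imfsetP. Qed.

Lemma mem_dsub U S u x : u \in U -> x \in S -> [seq a - x | a <- u] \in dsub U S.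
Proof. by move=> Uu Sx; apply/dsubP; exists u => //; exists x. Qed.

Lemma mem_cartp U V u v : u \in U -> v \in V -> u ++ v \in cartp U V.
Proof. by move=> Uu Vv; apply/cartpP; exists u => //; exists v. Qed.

Lemma mem_lift1 S x : x \in S -> [:: x] \in lift1 S.
Proof. by move=> Sx; apply/lift1P; exists x. Qed.

Lemma cartp_lift1P U X s :
  reflect (exists u x, [/\ u \in U, x \in X & s = u ++ [:: x]]) (s \in cartp U (lift1 X)).
Proof.
apply: (iffP idP) => [/cartpP [u Uu [_ /lift1P [x Xx ->] ->]]|[u [x [Uu Xx ->]]]].
  by exists u, x.
exact: mem_cartp Uu (mem_lift1 Xx).
Qed.

Lemma map_subr_inj (x : G) : injective (map (fun a => a - x)).
Proof. by apply: inj_map => a b /addIr. Qed.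

Lemma map_subr_subr (x z : G) s :
  [seq a - (z - x) | a <- [seq a - x | a <- s]] = [seq a - z | a <- s].
Proof. by rewrite -map_comp; apply: eq_map => a /=; rewrite opprB addrA subrK. Qed.

Lemma prodL_cat L1 L2 s : s \in prodL (L1 ++ L2) ->
  exists s1 s2, [/\ s = s1 ++ s2, s1 \in prodL L1 & s2 \in prodL L2].
Proof.
elim: L1 s => [|A L1 IH] s /=; first by exists [::], s; rewrite in_fset1.
move=> /cartpP [_ /lift1P [a Aa ->] [t /IH [s1 [s2 [-> L1s1 L2s2]]] ->]].
by exists (a :: s1), s2; split=> //; exact: mem_cartp (mem_lift1 Aa) L1s1.
Qed.

Lemma leq_card_dsub_prodL_cat L1 C L2 B :
  (#|` dsub (prodL (L1 ++ C :: L2)) B| <=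
     #|` dsub (prodL L1) C| * #|` dsub (prodL (C :: L2)) B|)%N.
Proof.
pose glue (p : seq G * seq G) := [seq a + head 0 p.2 | a <- p.1] ++ p.2.
rewrite -card_fsetM; apply: (@leq_card_fsub_imfset _ _ glue).
apply/fsubsetP => _ /dsubP [_ /prodL_cat [u [v [-> L1u CL2v]]] [b Bb ->]].
move: CL2v => /cartpP [_ /lift1P [c Cc ->] [t L2t ->]].
apply/imfsetP; exists ([seq a - c | a <- u], [seq a - b | a <- c :: t]).
  by rewrite in_fsetM !mem_dsub //; exact: mem_cartp (mem_lift1 Cc) L2t.
by rewrite /glue /= map_cat -map_comp; congr (_ ++ _); apply: eq_map => a /=; rewrite addrA subrK.
Qed.

Definition flip_last (s : seq G) :=
  [seq a - last 0 s | a <- rcons (take (size s).-1 s) 0].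

Lemma flip_last_shift y x z :
  flip_last [seq a - x | a <- y ++ [:: z]] = [seq a - z | a <- y ++ [:: x]].
Proof.
rewrite /flip_last map_cat /= size_cat size_map addn1 /= take_size_cat ?size_map //.
by rewrite last_cat /= -cats1 map_cat map_subr_subr /= map_cat /= sub0r opprB.
Qed.

Lemma dsub_cartp_lift1P Y X Z s :
  reflect (exists y x z, [/\ y \in Y, x \in X, z \in Z & s = [seq a - z | a <- y ++ [:: x]]])
          (s \in dsub (cartp Y (lift1 X)) Z).
Proof.
apply: (iffP idP) => [|[y [x [z [Yy Xx Zz ->]]]]].
  by move=> /dsubP [_ /cartp_lift1P [y [x [Yy Xx ->]]] [z Zz ->]]; exists y, x, z.
exact: mem_dsub (mem_cartp Yy (mem_lift1 Xx)) Zz.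
Qed.

Lemma leq_card_dsub_swap Y X Z :
  (#|` dsub (cartp Y (lift1 Z)) X| <= #|` dsub (cartp Y (lift1 X)) Z|)%N.
Proof.
apply: (@leq_card_fset_in _ _ flip_last).
  move=> s1 s2 /dsub_cartp_lift1P [y1 [z1 [x1 [_ _ _ ->]]]].
  move=> /dsub_cartp_lift1P [y2 [z2 [x2 [_ _ _ ->]]]].
  by move=> /(congr1 flip_last); rewrite !flip_last_shift.
move=> _ /dsub_cartp_lift1P [y [z [x [Yy Zz Xx ->]]]].
by rewrite flip_last_shift; apply/dsub_cartp_lift1P; exists y, x, z.
Qed.

Lemma card_dsub_swap Y X Z :
  #|` dsub (cartp Y (lift1 Z)) X| = #|` dsub (cartp Y (lift1 X)) Z|.
Proof. by apply/eqP; rewrite eqn_leq !leq_card_dsub_swap. Qed.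

Lemma dsub_repr U S : exists r : seq G -> seq G * G, {in dsub U S, forall d,
  [/\ (r d).1 \in U, (r d).2 \in S & d = [seq a - (r d).2 | a <- (r d).1]]}.
Proof.
pose P d (p : seq G * G) := [&& p.1 \in U, p.2 \in S & d == [seq a - p.2 | a <- p.1]].
have exP d : exists p, (d \in dsub U S) ==> P d p.
  case: (boolP (d \in dsub U S)) => [/dsubP [u Uu [x Sx ->]]|_]; last by exists ([::], 0).
  by exists (u, x); rewrite /P Uu Sx eqxx.
exists (fun d => xchoose (exP d)) => d USd.
by have /implyP /(_ USd) /and3P [-> -> /eqP] := xchooseP (exP d).
Qed.

Lemma leq_card_cartp_dsub n W Y X Z : {in W, forall w, size w = n} ->
  (#|` cartp W (lift1 X)| * #|` dsub Y Z| <= #|` dsub (cartp Y (cartp W (lift1 Z))) X|)%N.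
Proof.
move=> sizeW; have [r rP] := dsub_repr Y Z.
pose F (pd : seq G * seq G) :=
  [seq a - last 0 pd.1 | a <- (r pd.2).1 ++ take n pd.1 ++ [:: (r pd.2).2]].
rewrite -card_fsetM; apply: (@leq_card_fset_in _ _ F).
- move=> [p1 d1] [p2 d2]; rewrite !in_fsetM.
  move=> /andP [/= /cartp_lift1P [w1 [x1 [Ww1 _ ->]]] YZd1].
  move=> /andP [/= /cartp_lift1P [w2 [x2 [Ww2 _ ->]]] YZd2].
  have [_ _ Ed1] := rP _ YZd1; have [_ _ Ed2] := rP _ YZd2.
  rewrite /F /= !last_cat /= !take_size_cat ?(sizeW _ Ww1) ?(sizeW _ Ww2) // !map_cat => E.
  have := congr1 size E; rewrite !size_cat !size_map (sizeW _ Ww1) (sizeW _ Ww2).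
  move=> /eqP; rewrite eqn_add2r => /eqP sizey.
  move/eqP: E; rewrite eqseq_cat ?size_map // => /andP [/eqP ey].
  rewrite eqseq_cat ?size_map ?(sizeW _ Ww1) ?(sizeW _ Ww2) // => /andP [/eqP ew /eqP [ez]].
  have ed : d1 = d2.
    by rewrite [LHS]Ed1 [RHS]Ed2 -[LHS](map_subr_subr x1) -[RHS](map_subr_subr x2) ey ez.
  subst d2; have ex : x1 = x2 by move: ez => /addrI /oppr_inj.
  by subst x2; rewrite (map_subr_inj ew).
- move=> [p d]; rewrite in_fsetM => /andP [/= /cartp_lift1P [w [x [Ww Xx ->]]] YZd].
  have [Yy Zz _] := rP _ YZd.
  rewrite /F /= last_cat take_size_cat ?sizeW //.
  exact: mem_dsub (mem_cartp Yy (mem_cartp Ww (mem_lift1 Zz))) Xx.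
Qed.

End DifferenceSets.

Theorem theorem7 (G : zmodType) (k : nat) (A : nat -> {fset G}) (B : {fset G})
    (W Y : {fset seq G}) (X Z : {fset G}) :
  (1 <= k)%N ->
  {in W, forall w, size w = k} ->
  {in Y, forall y, size y = k} ->
  [/\ (#|` cartp W (lift1 X)| * #|` dsub Y Z| <=
         #|` dsub (cartp Y (cartp W (lift1 Z))) X|)%N,
      (forall m : nat, (1 <= m < k)%N ->
        (#|` dsub (prodL [seq A i | i <- iota 1 k]) B| <=
           #|` dsub (prodL [seq A i | i <- iota 1 m]) (A m.+1)| *
           #|` dsub (prodL [seq A i | i <- iota m.+1 (k - m)]) B|)%N)
    & #|` dsub (cartp Y (lift1 Z)) X| = #|` dsub (cartp Y (lift1 X)) Z| ].
Proof.
move=> _ sizeW _; split.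
- exact: leq_card_cartp_dsub sizeW.
- move=> m /andP [_ ltmk].
  have -> : k = (m + (k - m).-1.+1)%N by rewrite prednK ?subn_gt0 // subnKC // ltnW.
  rewrite addKn iotaD add1n map_cat /=.
  exact: leq_card_dsub_prodL_cat.
- exact: card_dsub_swap.
Qed.
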